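(* Let $u:[0,b)\to(0,\infty)$ be a solution of $\frac{u''}{1+(u')^2}=\frac{xu'}{2}-\frac u2+\frac{n-1}{u}$ with $u(0)<\sqrt{2(n-1)}$ and $u'(0)=0$. Then $u$ is strictly convex on $[0,b)$.
   Context: $n\ge2$ is a fixed integer. *)

From Stdlib Require Import Reals.
From Coquelicot Require Import Coquelicot.
Open Scope R_scope.

Definition in_I0b (b : Rbar) (x : R) : Prop := 0 <= x /\ Rbar_lt x b.

(* f' is the derivative of f on [0,b), computed within [0,b)
   (so at x = 0 this is the one-sided right derivative). *)
Definition deriv_on_I0b (b : Rbar) (f f' : R -> R) : Prop :=
  forall x, in_I0b b x ->
    filterlim (fun y => (f y - f x) / (y - x))
      (within (fun y => in_I0b b y /\ y <> x) (locally x))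
      (locally (f' x)).

Definition is_solution (n : nat) (b : Rbar) (u du ddu : R -> R) : Prop :=
  deriv_on_I0b b u du /\ deriv_on_I0b b du ddu /\
  forall x, in_I0b b x ->
    0 < u x /\
    ddu x / (1 + (du x)^2) = x * du x / 2 - u x / 2 + (INR n - 1) / u x.

Definition strictly_convex_on_I0b (b : Rbar) (u : R -> R) : Prop :=
  forall x y t, in_I0b b x -> in_I0b b y -> x < y -> 0 < t < 1 ->
    u (t * x + (1 - t) * y) < t * u x + (1 - t) * u y.

From Stdlib Require Import Reals Lra Psatz.
From Coquelicot Require Import Coquelicot.
Open Scope R_scope.

(* Write the equation as u'' = (1 + u'^2) Phi / (2u) with
   Phi = 2(n-1) - u^2 + x u u'.  Then Phi(0) > 0, and along the solution
   Phi' = Psi and Psi' = x u' u'' (2 + Phi) + x (1 + u'^2) Psi / 2, with Psi(0) = 0.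
   As long as Phi > 0 we have u'' > 0, hence u' > 0, so Psi' >= K Psi and a
   Gronwall argument gives Psi >= 0, i.e. Phi is nondecreasing.  Therefore Phi
   can never reach 0, u'' > 0 on all of [0,b) and u is strictly convex.
   One-sided derivatives at 0 are turned into genuine ones by extending u and
   u' to the left by their tangent lines. *)

Lemma ball_Rabs (x e y : R) : ball x e y <-> Rabs (y - x) < e.
Proof. reflexivity. Qed.

Lemma continuity_pt_of_is_derive (f : R -> R) (x l : R) :
  is_derive f x l -> continuity_pt f x.
Proof.
  intros H. apply derivable_continuous_pt. exists l. apply is_derive_Reals, H.
Qed.

Lemma locally_pos_of_continuity_pt (f : R -> R) (x : R) :
  continuity_pt f x -> 0 < f x -> locally x (fun y => 0 < f y).
Proof.
  intros Hc Hpos. apply continuity_pt_filterlim in Hc.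
  apply Hc, (open_Rbar_gt' (f x) 0), Hpos.
Qed.

Lemma MVT_is_derive (f f' : R -> R) (a c : R) :
  a < c -> (forall x, a <= x <= c -> is_derive f x (f' x)) ->
  exists xi, a < xi < c /\ f c - f a = f' xi * (c - a).
Proof.
  intros Hac Hd.
  destruct (MVT_cor2 f f' a c Hac) as [xi [E Hxi]].
  - intros x Hx. apply is_derive_Reals, Hd, Hx.
  - exists xi. split; assumption.
Qed.

Lemma increasing_of_is_derive_pos (f f' : R -> R) (a c : R) :
  a < c -> (forall x, a <= x <= c -> is_derive f x (f' x)) ->
  (forall x, a < x < c -> 0 < f' x) -> f a < f c.
Proof.
  intros Hac Hd Hpos.
  destruct (MVT_is_derive f f' a c Hac Hd) as [xi [Hxi E]].
  assert (0 < f' xi * (c - a)) by (apply Rmult_lt_0_compat; [apply Hpos, Hxi | lra]).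
  lra.
Qed.

Lemma strict_convexity_of_derive_increasing (f f' : R -> R) (x y t : R) :
  x < y -> 0 < t < 1 -> (forall s, x <= s <= y -> is_derive f s (f' s)) ->
  (forall s s', x <= s -> s < s' -> s' <= y -> f' s < f' s') ->
  f (t * x + (1 - t) * y) < t * f x + (1 - t) * f y.
Proof.
  intros Hxy Ht Hd Hinc.
  set (z := t * x + (1 - t) * y).
  assert (Hxz : x < z) by (unfold z; nra).
  assert (Hzy : z < y) by (unfold z; nra).
  destruct (MVT_is_derive f f' x z Hxz) as [x1 [Hx1 E1]].
  { intros s Hs. apply Hd. lra. }
  destruct (MVT_is_derive f f' z y Hzy) as [x2 [Hx2 E2]].
  { intros s Hs. apply Hd. lra. }
  assert (H1 : f' x1 < f' z) by (apply Hinc; lra).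
  assert (H2 : f' z < f' x2) by (apply Hinc; lra).
  (* both chords are compared with the tangent slope at z *)
  assert (I1 : t * (f z - f x) < t * (f' z * (z - x))).
  { rewrite E1. apply Rmult_lt_compat_l, Rmult_lt_compat_r; lra. }
  assert (I2 : (1 - t) * (f' z * (y - z)) < (1 - t) * (f y - f z)).
  { rewrite E2. apply Rmult_lt_compat_l, Rmult_lt_compat_r; lra. }
  assert (Ez : t * (z - x) = (1 - t) * (y - z)) by (unfold z; ring).
  nra.
Qed.

Lemma lt_left_of_is_derive_pos (f : R -> R) (m l : R) :
  is_derive f m l -> 0 < l -> exists d, 0 < d /\ forall t, m - d < t < m -> f t < f m.
Proof.
  intros Hd Hl. apply is_derive_Reals in Hd.
  destruct (Hd l Hl) as [d Hq]. exists d. split; [apply cond_pos |].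
  intros t Ht.
  specialize (Hq (t - m) ltac:(lra) ltac:(apply Rabs_def1; lra)).
  replace (m + (t - m)) with t in Hq by ring.
  apply Rabs_def2 in Hq.
  assert (Hslope : 0 < (f t - f m) / (t - m)) by lra.
  assert (E : f t - f m = (f t - f m) / (t - m) * (t - m)) by (field; lra).
  nra.
Qed.

(* At a point where f < 0 and f' > 0, f was even smaller just before;
   so the minimum of f on [a,w] cannot be negative. *)
Lemma nonneg_of_is_derive_pos_where_neg (f f' : R -> R) (a w : R) :
  a <= w -> (forall x, a <= x <= w -> is_derive f x (f' x)) -> 0 <= f a ->
  (forall x, a < x <= w -> f x < 0 -> 0 < f' x) -> 0 <= f w.
Proof.
  intros Haw Hd Ha Hpos.
  destruct (Rle_or_lt 0 (f w)) as [| Hw]; [assumption | exfalso].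
  destruct (continuity_ab_min f a w Haw) as [m [Hmin Hm]].
  { intros c Hc. exact (continuity_pt_of_is_derive _ _ _ (Hd c Hc)). }
  assert (Hfm : f m < 0) by (specialize (Hmin w ltac:(lra)); lra).
  assert (Ham : a < m) by (destruct (Req_dec m a) as [-> | ]; lra).
  destruct (lt_left_of_is_derive_pos f m (f' m)) as [d [Hd0 Hleft]].
  { apply Hd. lra. }
  { apply Hpos; lra. }
  set (t := Rmax (m - d / 2) ((a + m) / 2)).
  assert (Ht1 : m - d / 2 <= t) by apply Rmax_l.
  assert (Ht2 : (a + m) / 2 <= t) by apply Rmax_r.
  assert (Ht3 : t < m) by (apply Rmax_lub_lt; lra).
  specialize (Hleft t ltac:(lra)). specialize (Hmin t ltac:(lra)). lra.
Qed.

Lemma Gronwall_nonneg (f f' : R -> R) (K a w : R) :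
  a <= w -> (forall x, a <= x <= w -> is_derive f x (f' x)) -> 0 <= f a ->
  (forall x, a < x <= w -> f x < 0 -> K * f x <= f' x) -> 0 <= f w.
Proof.
  intros Haw Hd Ha Hineq.
  set (e := fun x => exp (- ((K + 1) * x))).
  assert (He : forall x, 0 < e x) by (intros; apply exp_pos).
  assert (Hg : 0 <= f w * e w).
  { apply (nonneg_of_is_derive_pos_where_neg (fun x => f x * e x)
             (fun x => (f' x - (K + 1) * f x) * e x) a w Haw).
    - intros x Hx. specialize (Hd x Hx). unfold e. auto_derive.
      + exists (f' x). exact Hd.
      + replace (Derive (fun y => f y) x) with (f' x)
          by (symmetry; apply is_derive_unique; exact Hd).
        ring.

    - pose proof (He a). nra.
    - intros x Hx Hneg. specialize (He x).
      assert (Hfx : f x < 0) by nra.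
      specialize (Hineq x Hx Hfx).
      apply Rmult_lt_0_compat; lra. }
  specialize (He w). nra.
Qed.

Lemma first_nonpos (f : R -> R) (a y : R) :
  a < y -> (forall x, a <= x <= y -> continuity_pt f x) -> 0 < f a -> f y <= 0 ->
  exists z, a < z <= y /\ f z <= 0 /\ forall t, a <= t < z -> 0 < f t.
Proof.
  intros Hay Hc Ha Hy.
  set (E := fun t => a <= t <= y /\ forall s, a <= s <= t -> 0 < f s).
  assert (HEa : E a).
  { split; [lra |]. intros s Hs. replace s with a by lra. exact Ha. }
  destruct (completeness E) as [z [Hub Hlub]].
  { exists y. intros t [Ht _]. lra. }
  { exists a. exact HEa. }
  assert (Hzy : z <= y) by (apply Hlub; intros t [Ht _]; lra).
  assert (Haz : a <= z) by (apply Hub, HEa).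
  assert (Hbelow : forall t, a <= t < z -> 0 < f t).
  { intros t Ht. destruct (Rlt_or_le 0 (f t)) as [| Hft]; [assumption | exfalso].
    assert (t >= z); [| lra].
    apply Rle_ge, Hlub. intros e [He Hpos].
    destruct (Rle_or_lt e t); [assumption |].
    specialize (Hpos t ltac:(lra)). lra. }
  (* a positive neighbourhood of c in [a,y] would push the supremum beyond c *)
  assert (Hext : forall c, a <= c -> c < y -> (forall t, a <= t < c -> 0 < f t) ->
                  0 < f c -> z > c).
  { intros c Hac Hcy Hbc Hfc.
    destruct (locally_pos_of_continuity_pt f c (Hc c ltac:(lra)) Hfc) as [d Hd].
    set (t := Rmin (c + d / 2) y).
    assert (Ht1 : t <= c + d / 2) by apply Rmin_l.
    assert (Ht2 : t <= y) by apply Rmin_r.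
    assert (Ht3 : c < t) by (apply Rmin_glb_lt; pose proof (cond_pos d); lra).
    assert (E t).
    { split; [lra |]. intros s Hs. destruct (Rlt_or_le s c); [apply Hbc; lra |].
      apply Hd, ball_Rabs, Rabs_def1; pose proof (cond_pos d); lra. }
    specialize (Hub t ltac:(assumption)). lra. }
  assert (Haz' : a < z).
  { apply Hext; [lra | lra | intros; lra | exact Ha]. }
  exists z. split; [lra |]. split; [| exact Hbelow].
  destruct (Rle_or_lt (f z) 0) as [| Hfz]; [assumption | exfalso].
  destruct (Req_dec z y) as [-> | Hne]; [lra |].
  specialize (Hext z Haz ltac:(lra) Hbelow Hfz). lra.
Qed.

Lemma in_I0b_le (b : Rbar) (s t : R) : 0 <= s -> s <= t -> in_I0b b t -> in_I0b b s.
Proof.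
  intros Hs Hst [_ Ht]. split; [exact Hs |]. exact (Rbar_le_lt_trans s t b Hst Ht).
Qed.

Lemma strictly_convex_on_I0b_ext (b : Rbar) (f g : R -> R) :
  (forall y, 0 <= y -> f y = g y) -> strictly_convex_on_I0b b f -> strictly_convex_on_I0b b g.
Proof.
  intros E Hf x y t Hx Hy Hxy Ht.
  pose proof (proj1 Hx). pose proof (proj1 Hy).
  rewrite <- !E by nra. apply Hf; assumption.
Qed.

Definition tangent_ext (f f' : R -> R) (y : R) : R := f (Rmax 0 y) + f' 0 * Rmin 0 y.

Lemma tangent_ext_eq (f f' : R -> R) (y : R) : 0 <= y -> tangent_ext f f' y = f y.
Proof.
  intros Hy. unfold tangent_ext. rewrite Rmax_right, Rmin_left by lra. ring.
Qed.

Lemma is_derive_tangent_ext (b : Rbar) (f f' : R -> R) (x : R) :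
  deriv_on_I0b b f f' -> in_I0b b x -> is_derive (tangent_ext f f') x (f' x).
Proof.
  intros Hd Hx. destruct Hx as [Hx0 Hxb]. apply is_derive_Reals. intros eps Heps.
  assert (Hloc : locally x (fun y =>
     (in_I0b b y /\ y <> x -> Rabs ((f y - f x) / (y - x) - f' x) < eps) /\
     Rbar_lt y b /\ (0 < x -> 0 < y))).
  { repeat apply filter_and.
    - apply (Hd x (conj Hx0 Hxb) (fun r => Rabs (r - f' x) < eps)).
      exists (mkposreal eps Heps). intros r Hr. exact Hr.
    - exact (open_Rbar_lt' x b Hxb).
    - destruct (Rlt_or_le 0 x) as [Hpos | Hnpos].
      + apply (filter_imp (fun y => 0 < y)); [auto |].
        exact (open_Rbar_gt' x 0 Hpos).
      + apply filter_forall. intros y H. lra. }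
  destruct Hloc as [d Hball]. exists d. intros h Hh0 Hh.
  destruct (Hball (x + h)) as [Hq [Hb Hpos]].
  { apply ball_Rabs. replace (x + h - x) with h by ring. exact Hh. }
  destruct (Rle_or_lt 0 (x + h)) as [Hy | Hy].
  - rewrite !tangent_ext_eq by lra.
    replace h with (x + h - x) at 2 by ring.
    apply Hq. split; [split; assumption | lra].
  - (* to the left of 0 the difference quotient is exactly f'(0) *)
    assert (x = 0) as -> by (destruct Hx0 as [Hlt |]; [specialize (Hpos Hlt) |]; lra).
    rewrite (tangent_ext_eq f f' 0) by lra. unfold tangent_ext.
    rewrite Rmax_left, Rmin_right by lra.
    replace ((f 0 + f' 0 * (0 + h) - f 0) / h - f' 0) with 0 by (field; exact Hh0).
    rewrite Rabs_R0. exact Heps.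
Qed.

Lemma ode_ddu_eq (c x y dy ddy : R) :
  0 < y -> ddy / (1 + dy ^ 2) = x * dy / 2 - y / 2 + c / y ->
  ddy = (1 + dy ^ 2) * (2 * c - y ^ 2 + x * y * dy) / (2 * y).
Proof.
  intros Hy E.
  assert (Hd : 0 < 1 + dy ^ 2) by nra.
  replace ddy with (ddy / (1 + dy ^ 2) * (1 + dy ^ 2)) by (field; lra).
  rewrite E. field. lra.
Qed.

Section Solution.

Variables (r2 : R) (b : Rbar) (u du ddu : R -> R).

Definition Phi (x : R) : R := r2 - u x ^ 2 + x * u x * du x.

Definition Psi (x : R) : R := x * du x ^ 2 - u x * du x + x * (1 + du x ^ 2) * Phi x / 2.

Hypothesis is_derive_u : forall x, in_I0b b x -> is_derive u x (du x).
Hypothesis is_derive_du : forall x, in_I0b b x -> is_derive du x (ddu x).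
Hypothesis u_pos : forall x, in_I0b b x -> 0 < u x.
Hypothesis ode : forall x, in_I0b b x -> ddu x = (1 + du x ^ 2) * Phi x / (2 * u x).

Lemma is_derive_Phi (x : R) : in_I0b b x -> is_derive Phi x (Psi x).
Proof.
  intros Hx. pose proof (is_derive_u x Hx) as Du. pose proof (is_derive_du x Hx) as Ddu.
  unfold Phi. auto_derive.
  - repeat split; eexists; eassumption.
  - replace (Derive (fun y => u y) x) with (du x) by (symmetry; apply is_derive_unique, Du).
    replace (Derive (fun y => du y) x) with (ddu x) by (symmetry; apply is_derive_unique, Ddu).
    rewrite (ode x Hx).
    unfold Psi, Phi. field. apply Rgt_not_eq, u_pos, Hx.
Qed.

Lemma is_derive_Psi (x : R) : in_I0b b x ->
  is_derive Psi x (x * du x * ddu x * (2 + Phi x) + x * (1 + du x ^ 2) * Psi x / 2).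
Proof.
  intros Hx. pose proof (is_derive_u x Hx) as Du. pose proof (is_derive_du x Hx) as Ddu.
  pose proof (is_derive_Phi x Hx) as DPhi.
  unfold Psi. auto_derive.
  - repeat split; eexists; eassumption.
  - replace (Derive (fun y => u y) x) with (du x) by (symmetry; apply is_derive_unique, Du).
    replace (Derive (fun y => du y) x) with (ddu x) by (symmetry; apply is_derive_unique, Ddu).
    replace (Derive (fun y => Phi y) x) with (Psi x) by (symmetry; apply is_derive_unique, DPhi).
    unfold Psi. rewrite (ode x Hx). field. apply Rgt_not_eq, u_pos, Hx.
Qed.

Lemma ddu_pos (x : R) : in_I0b b x -> 0 < Phi x -> 0 < ddu x.
Proof.
  intros Hx HPhi. rewrite (ode x Hx). pose proof (u_pos x Hx).
  apply Rdiv_lt_0_compat; [apply Rmult_lt_0_compat |]; nra.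
Qed.

Lemma du_lt (s t : R) : 0 <= s < t -> in_I0b b t ->
  (forall x, s < x < t -> 0 < Phi x) -> du s < du t.
Proof.
  intros Hst Ht HPhi. apply (increasing_of_is_derive_pos du ddu); [lra | |].
  - intros x Hx. apply is_derive_du, (in_I0b_le b x t); [lra | lra | exact Ht].
  - intros x Hx. apply ddu_pos; [apply (in_I0b_le b x t); [lra | lra | exact Ht] |].
    apply HPhi, Hx.
Qed.

Hypothesis du0 : du 0 = 0.

Lemma Psi_nonneg (z w : R) : in_I0b b z -> (forall t, 0 <= t < z -> 0 < Phi t) ->
  0 <= w < z -> 0 <= Psi w.
Proof.
  intros Hz HPhi Hw.
  apply (Gronwall_nonneg Psi
           (fun x => x * du x * ddu x * (2 + Phi x) + x * (1 + du x ^ 2) * Psi x / 2)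
           (w * (1 + du w ^ 2) / 2) 0 w); [lra | | |].
  - intros x Hx. apply is_derive_Psi, (in_I0b_le b x z); [lra | lra | exact Hz].
  - right. unfold Psi. rewrite du0. field.
  - intros x Hx HPsi.
    assert (Hxz : in_I0b b x) by (apply (in_I0b_le b x z); [lra | lra | exact Hz]).
    assert (Hdx : 0 < du x).
    { rewrite <- du0. apply du_lt; [lra | exact Hxz | intros; apply HPhi; lra]. }
    assert (Hdxw : du x <= du w).
    { destruct (Req_dec x w) as [-> | Hne]; [lra |].
      left. apply du_lt; [lra | apply (in_I0b_le b w z); [lra | lra | exact Hz] |].
      intros; apply HPhi; lra. }
    pose proof (ddu_pos x Hxz (HPhi x ltac:(lra))). pose proof (HPhi x ltac:(lra)).
    assert (0 <= x * du x * ddu x * (2 + Phi x)).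
    { repeat apply Rmult_le_pos; lra. }
    assert (Hsq : du x ^ 2 <= du w ^ 2) by nra.
    assert (x * (1 + du x ^ 2) <= w * (1 + du w ^ 2)).
    { apply Rmult_le_compat; nra. }
    nra.
Qed.

Hypothesis Phi0 : 0 < Phi 0.

Lemma Phi_pos (x : R) : in_I0b b x -> 0 < Phi x.
Proof.
  intros Hx. destruct (Rlt_or_le 0 (Phi x)) as [| Hneg]; [assumption | exfalso].
  assert (Hx0 : 0 < x) by (destruct Hx as [[| <-] _]; lra).
  destruct (first_nonpos Phi 0 x Hx0) as [z [Hz [HPhiz Hbelow]]]; [| exact Phi0 | exact Hneg |].
  { intros y Hy. apply (continuity_pt_of_is_derive _ _ (Psi y)), is_derive_Phi.
    apply (in_I0b_le b y x); [lra | lra | exact Hx]. }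
  assert (Hzb : in_I0b b z) by (apply (in_I0b_le b z x); [lra | lra | exact Hx]).
  destruct (MVT_is_derive Phi Psi 0 z) as [xi [Hxi E]]; [lra | |].
  { intros y Hy. apply is_derive_Phi, (in_I0b_le b y z); [lra | lra | exact Hzb]. }
  pose proof (Psi_nonneg z xi Hzb Hbelow ltac:(lra)). nra.
Qed.

Lemma solution_strictly_convex : strictly_convex_on_I0b b u.
Proof.
  intros x y t Hx Hy Hxy Ht.
  apply (strict_convexity_of_derive_increasing u du); [exact Hxy | exact Ht | |].
  - intros s Hs. apply is_derive_u, (in_I0b_le b s y); [destruct Hx; lra | lra | exact Hy].
  - intros s s' Hs Hss' Hs'. apply du_lt; [destruct Hx; lra | |].
    + apply (in_I0b_le b s' y); [destruct Hx; lra | lra | exact Hy].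
    + intros v Hv. apply Phi_pos, (in_I0b_le b v y); [destruct Hx; lra | lra | exact Hy].
Qed.

End Solution.

Theorem lemma2p9 (n : nat) (hn : (2 <= n)%nat) (b : Rbar) (hb : Rbar_lt 0 b)
  (u du ddu : R -> R) :
  is_solution n b u du ddu ->
  u 0 < sqrt (2 * (INR n - 1)) ->
  du 0 = 0 ->
  strictly_convex_on_I0b b u.
Proof.
  intros [Du [Ddu Hsol]] Hu0 Hdu0.
  set (U := tangent_ext u du). set (V := tangent_ext du ddu).
  assert (EU : forall y, 0 <= y -> U y = u y) by (intros; apply tangent_ext_eq; assumption).
  assert (EV : forall y, 0 <= y -> V y = du y) by (intros; apply tangent_ext_eq; assumption).
  apply (strictly_convex_on_I0b_ext b U u EU).
  apply (solution_strictly_convex (2 * (INR n - 1)) b U V ddu).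
  - intros x Hx. rewrite EV by apply Hx. exact (is_derive_tangent_ext b u du x Du Hx).
  - intros x Hx. exact (is_derive_tangent_ext b du ddu x Ddu Hx).
  - intros x Hx. rewrite EU by apply Hx. apply Hsol, Hx.
  - intros x Hx. unfold Phi. rewrite EU, EV by apply Hx.
    apply ode_ddu_eq; apply Hsol, Hx.
  - rewrite EV by lra. exact Hdu0.
  - unfold Phi. rewrite EU, EV by lra. rewrite Hdu0.
    assert (Hpos : 0 < u 0) by (apply Hsol; split; [lra | exact hb]).
    assert (u 0 ^ 2 < 2 * (INR n - 1)).
    { apply sqrt_lt_0_alt. rewrite sqrt_pow2 by lra. exact Hu0. }
    lra.
Qed.
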